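(* For every alphabet $\Sigma$, $\mathrm{RevL}(\mathbb{F}_2,\Sigma)$ equals the Boolean closure of $\mathrm{RevL}(\mathbb{B},\Sigma)$, i.e., the smallest set of languages over $\Sigma$ containing $\mathrm{RevL}(\mathbb{B},\Sigma)$ and closed under complementation in $\Sigma^*$, finite unions and finite intersections. In other words, the class $\mathrm{RevL}(\mathbb{F}_2)$ is the Boolean closure of $\mathrm{RevL}(\mathbb{B})$.
   Context: $\mathbb{F}_2$ is the two-element field and $\mathbb{B}=(\{0,1\},\lor,\land,0,1)$ the Boolean semiring. For a semiring $S$ and finite nonempty alphabet $\Sigma$, a series is a map $r\colon\Sigma^*\to S$ with value $(r,w)$ and support $\mathrm{supp}(r)=\{w\mid(r,w)\neq0\}$. A weighted automaton over $S$ and $\Sigma$ is $\mathcal{A}=(Q,\sigma,\iota,\tau)$ with $Q$ finite, $\sigma\colon Q\times\Sigma\times Q\to S$, $\iota,\tau\colon Q\to S$; a run on $w=a_1\cdots a_t$ is $q_0a_1q_1\cdots a_tq_t$ with all $\sigma(q_{k-1},a_k,q_k)\neq0$, of weight $\iota(q_0)\sigma(q_0,a_1,q_1)\cdots\sigma(q_{t-1},a_t,q_t)\tau(q_t)$, and $(\|\mathcal{A}\|,w)$ is the sum of weights of all runs on $w$. $\mathcal{A}$ is reversible if for all $p,p',q,q'\in Q$, $a\in\Sigma$: $\sigma(p,a,q)\neq0\neq\sigma(p,a,q')$ implies $q=q'$, and $\sigma(p,a,q)\neq0\neq\sigma(p',a,q)$ implies $p=p'$. $\mathrm{RevL}(S,\Sigma)$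 is the set of supports of series realised by reversible weighted automata over $S$ and $\Sigma$, and $\mathrm{RevL}(S)$ the class of all such languages over all alphabets. $\mathrm{RevL}(\mathbb{B},\Sigma)$ is exactly the set of languages recognised by reversible finite automata in the sense of Pin (transition relation deterministic and codeterministic, arbitrary sets of initial and final states). *)

From HB Require Import structures.
From mathcomp Require Import all_boot all_algebra.
Set Implicit Arguments. Unset Strict Implicit. Unset Printing Implicit Defensive.

Record wautomaton (S : Type) (Sigma : finType) := WAut {
  wa_Q : finType;
  wa_sigma : wa_Q -> Sigma -> wa_Q -> S;
  wa_iota : wa_Q -> S;
  wa_tau : wa_Q -> S }.
Arguments wa_sigma {S Sigma} w _ _ _.
Arguments wa_iota {S Sigma} w _.
Arguments wa_tau {S Sigma} w _.

Section WA.
Variables (S : eqType) (add mul : S -> S -> S) (zero one : S) (Sigma : finType).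

Definition is_run (A : wautomaton S Sigma) (w : seq Sigma)
  (f : {ffun 'I_(size w).+1 -> wa_Q A}) : bool :=
  [forall k : 'I_(size w),
     wa_sigma A (f (inord k)) (tnth (in_tuple w) k) (f (inord k.+1)) != zero].

Definition run_weight (A : wautomaton S Sigma) (w : seq Sigma)
  (f : {ffun 'I_(size w).+1 -> wa_Q A}) : S :=
  mul (mul (wa_iota A (f ord0))
           (\big[mul/one]_(k < size w)
               wa_sigma A (f (inord k)) (tnth (in_tuple w) k) (f (inord k.+1))))
      (wa_tau A (f ord_max)).

Definition behaviour (A : wautomaton S Sigma) (w : seq Sigma) : S :=
  \big[add/zero]_(f : {ffun 'I_(size w).+1 -> wa_Q A} | is_run f) run_weight f.

Definition reversible (A : wautomaton S Sigma) : Prop :=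
  (forall p q q' a, wa_sigma A p a q != zero -> wa_sigma A p a q' != zero -> q = q')
  /\ (forall p p' q a, wa_sigma A p a q != zero -> wa_sigma A p' a q != zero -> p = p').

Definition language := seq Sigma -> bool.

Definition RevL (L : language) : Prop :=
  exists A : wautomaton S Sigma, reversible A /\
    forall w, L w = (behaviour A w != zero).
End WA.

Inductive bool_closure (Sigma : finType) (C : language Sigma -> Prop)
  : language Sigma -> Prop :=
| bc_base L : C L -> bool_closure C L
| bc_compl L : bool_closure C L -> bool_closure C (fun w => ~~ L w)
| bc_empty : bool_closure C (fun _ => false)
| bc_full : bool_closure C (fun _ => true)
| bc_union L1 L2 : bool_closure C L1 -> bool_closure C L2 ->
    bool_closure C (fun w => L1 w || L2 w)
| bc_inter L1 L2 : bool_closure C L1 -> bool_closure C L2 ->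
    bool_closure C (fun w => L1 w && L2 w).

Definition RevL_F2 (Sigma : finType) : language Sigma -> Prop :=
  @RevL 'F_2 (fun x y => x + y)%R (fun x y => x * y)%R 0%R 1%R Sigma.
Definition RevL_B (Sigma : finType) : language Sigma -> Prop :=
  @RevL bool orb andb false true Sigma.

(* In a deterministic automaton every state starts at most one run on a given
   word, so the accepting runs on w correspond to the initial states p for which
   the automaton N_p with p as sole initial state accepts w.  Over F_2 and over
   B every nonzero weight is 1, hence a weighted automaton accepts w iff the
   number of accepting runs of its support is odd, resp. positive.  A language
   of RevL(F_2) is therefore the symmetric difference, and one of RevL(B) the
   union, of the languages of the reversible automata N_p.  Conversely, the
   parity languages of reversible automata contain the constants and are closed
   under symmetric difference (disjoint union adds run counts) and intersection
   (product multiplies them), hence under all Boolean operations. *)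

From mathcomp Require Import all_boot all_algebra.
From Stdlib Require Import FunctionalExtensionality.
Set Implicit Arguments. Unset Strict Implicit. Unset Printing Implicit Defensive.
Import GRing.Theory.

Lemma inord_ind n (P : 'I_n.+1 -> Prop) :
  P ord0 -> (forall k : 'I_n, P (inord k) -> P (inord k.+1)) -> forall k, P k.
Proof.
move=> P0 PS k; rewrite -(inord_val k).
elim: (val k) (ltn_ord k) => [|i IH] lt_i.
  by rewrite (_ : inord 0 = ord0) //; apply/val_inj; rewrite /= inordK.
exact: (PS (@Ordinal n i lt_i) (IH (ltnW lt_i))).
Qed.

Lemma forall_andb (T : finType) (P Q : pred T) :
  [forall x, P x && Q x] = [forall x, P x] && [forall x, Q x].
Proof.
apply/forallP/andP => [PQ | [/forallP P_ /forallP Q_] x]; last by rewrite P_ Q_.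
by split; apply/forallP => x; case/andP: (PQ x).
Qed.

Section Languages.
Variable Sigma : finType.
Implicit Types (C : language Sigma -> Prop) (L : language Sigma).

Lemma language_big_ind (P : language Sigma -> Prop) (op : bool -> bool -> bool)
    (idx : bool) (I : Type) (r : seq I) (Pr : pred I) (F : I -> language Sigma) :
  P (fun _ => idx) -> (forall L1 L2, P L1 -> P L2 -> P (fun w => op (L1 w) (L2 w))) ->
  (forall i, Pr i -> P (F i)) -> P (fun w => \big[op/idx]_(i <- r | Pr i) F i w).
Proof.
move=> P_idx P_op P_F.
pose lop (L1 L2 : language Sigma) w := op (L1 w) (L2 w).
have -> : (fun w => \big[op/idx]_(i <- r | Pr i) F i w) =
          \big[lop/fun _ => idx]_(i <- r | Pr i) F i.
  apply: functional_extensionality => w.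
  by rewrite (big_morph (fun L : language Sigma => L w) (id1 := idx) (op1 := op)).
exact: big_ind.
Qed.

Lemma bool_closure_ext C L L' :
  (forall w, L w = L' w) -> bool_closure C L -> bool_closure C L'.
Proof. by move=> /functional_extensionality ->. Qed.

Lemma bool_closure_xor C L1 L2 : bool_closure C L1 -> bool_closure C L2 ->
  bool_closure C (fun w => L1 w (+) L2 w).
Proof.
move=> h1 h2.
apply: bool_closure_ext (bc_union (bc_inter h1 (bc_compl h2)) (bc_inter (bc_compl h1) h2)).
by move=> w; case: (L1 w); case: (L2 w).
Qed.

Lemma bool_closure_mono C C' L :
  (forall L, C L -> C' L) -> bool_closure C L -> bool_closure C' L.
Proof.
move=> CC'; elim=> {L} [L /CC'|L _|||L1 L2 _ h1 _ h2|L1 L2 _ h1 _ h2];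
  by constructor.
Qed.

End Languages.

Section NFA.
Variable Sigma : finType.

Record nfa := NFA {
  nfa_state : finType;
  nfa_step : nfa_state -> Sigma -> nfa_state -> bool;
  nfa_init : pred nfa_state;
  nfa_final : pred nfa_state }.

Implicit Types N : nfa.

Definition nfa_run N w (f : {ffun 'I_(size w).+1 -> nfa_state N}) : bool :=
  [forall k : 'I_(size w), nfa_step (f (inord k)) (tnth (in_tuple w) k) (f (inord k.+1))].

Definition accepting N w : {set {ffun 'I_(size w).+1 -> nfa_state N}} :=
  [set f | [&& nfa_run f, @nfa_init N (f ord0) & @nfa_final N (f ord_max)]].

Definition nfa_det N : Prop :=
  forall (p q q' : nfa_state N) a, nfa_step p a q -> nfa_step p a q' -> q = q'.

Definition nfa_reversible N : Prop :=
  nfa_det N /\ forall (p p' q : nfa_state N) a, nfa_step p a q -> nfa_step p' a q -> p = p'.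

(* [acc] decides acceptance from the number of accepting runs: [odd] for the
   semiring F_2, [leq 1] (at least one run) for the Boolean semiring. *)
Definition rev_nfa_lang (acc : pred nat) (L : language Sigma) : Prop :=
  exists N, nfa_reversible N /\ forall w, L w = acc #|accepting N w|.

Lemma det_run_unique N w (f g : {ffun 'I_(size w).+1 -> nfa_state N}) :
  nfa_det N -> nfa_run f -> nfa_run g -> f ord0 = g ord0 -> f = g.
Proof.
move=> detN /forallP f_run /forallP g_run fg0; apply/ffunP.
apply: inord_ind => // k fg_k.
by apply: detN (f_run k) _; rewrite fg_k.
Qed.

Definition nfa_at N (p : nfa_state N) :=
  NFA (@nfa_step N) (pred1 p) (@nfa_final N).

Lemma card_accepting_at N (p : nfa_state N) w : nfa_det N -> #|accepting (nfa_at p) w| <= 1.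
Proof.
move=> detN; rewrite leqNgt; apply/negP => /card_gt1P [f [g [+ + /eqP[]]]].
rewrite !inE => /and3P [f_run /eqP f0 _] /and3P [g_run /eqP g0 _].
by apply: det_run_unique; rewrite // f0 g0.
Qed.

Lemma card_accepting_partition N w :
  #|accepting N w| = \sum_(p | @nfa_init N p) #|accepting (nfa_at p) w|.
Proof.
pose start (f : {ffun 'I_(size w).+1 -> nfa_state N}) := f ord0.
rewrite -sum1_card (partition_big start (@nfa_init N)); last first.
  by move=> f; rewrite inE => /and3P [].
apply: eq_bigr => p init_p; rewrite -sum1_card; apply: eq_bigl => f.
by rewrite !inE /start /=; case: eqP => [->|_]; rewrite ?init_p ?andbT ?andbF.
Qed.

Lemma odd_card_accepting_at N (p : nfa_state N) w : nfa_det N ->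
  odd #|accepting (nfa_at p) w| = (0 < #|accepting (nfa_at p) w|).
Proof. by move=> /(card_accepting_at p w); case: #|_| => [|[]]. Qed.

Lemma odd_card_accepting N w : nfa_det N ->
  odd #|accepting N w| =
  \big[addb/false]_(p | @nfa_init N p) (0 < #|accepting (nfa_at p) w|).
Proof.
move=> detN; rewrite card_accepting_partition (big_morph odd oddD (erefl : odd 0 = false)).
by apply: eq_bigr => p _; rewrite odd_card_accepting_at.
Qed.

Lemma card_accepting_gt0 N w : nfa_det N ->
  (0 < #|accepting N w|) =
  \big[orb/false]_(p | @nfa_init N p) odd #|accepting (nfa_at p) w|.
Proof.
move=> detN; rewrite card_accepting_partition.
rewrite (big_morph (fun n => 0 < n) addn_gt0 (erefl : (0 < 0) = false)).
by apply: eq_bigr => p _; rewrite odd_card_accepting_at.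
Qed.

Definition const_nfa (b : bool) :=
  NFA (fun (_ : unit) (_ : Sigma) (_ : unit) => true) (fun _ => b) (fun _ => true).

Lemma card_accepting_const b w : #|accepting (const_nfa b) w| = b.
Proof.
case: b.
  have -> : accepting (const_nfa true) w = setT.
    by apply/setP => f; rewrite !inE andbT; apply/forallP.
  by rewrite cardsT card_ffun card_unit exp1n.
have -> : accepting (const_nfa false) w = set0 by apply/setP => f; rewrite !inE andbF.
exact: cards0.
Qed.

Section Embedding.
Variables (N1 N2 : nfa) (h : nfa_state N1 -> nfa_state N2).

Definition map_run n (g : {ffun 'I_n -> nfa_state N1}) : {ffun 'I_n -> nfa_state N2} :=
  [ffun k => h (g k)].

Lemma map_run_inj n : injective h -> injective (@map_run n).
Proof.
move=> h_inj g g' /ffunP eq_gg'; apply/ffunP => k; apply: h_inj.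
by have := eq_gg' k; rewrite !ffunE.
Qed.

Hypothesis step_h : forall p a q, nfa_step (h p) a (h q) = nfa_step p a q.
Hypothesis init_h : forall p, nfa_init (h p) = nfa_init p.
Hypothesis final_h : forall p, nfa_final (h p) = nfa_final p.

Lemma map_run_accepting w g : (map_run g \in accepting N2 w) = (g \in accepting N1 w).
Proof.
rewrite !inE !ffunE init_h final_h; congr (_ && _).
by apply: eq_forallb => k; rewrite !ffunE step_h.
Qed.

Hypothesis step_from_h : forall p a y, nfa_step (h p) a y -> exists q, y = h q.

Lemma accepting_from_image w f p : f \in accepting N2 w -> f ord0 = h p ->
  exists2 g, g \in accepting N1 w & f = map_run g.
Proof.
move=> f_acc f0; have := f_acc; rewrite inE => /and3P [/forallP f_run _ _].
have /fin_all_exists [g f_g] : forall k, exists q, f k = h q.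
  apply: inord_ind => [|k [q f_k]]; first by exists p.
  by have := f_run k; rewrite f_k; exact: step_from_h.
have f_eq : f = map_run (finfun g) by apply/ffunP => k; rewrite !ffunE f_g.
by exists (finfun g); rewrite // -map_run_accepting -f_eq.
Qed.

End Embedding.

Definition nfa_sum N1 N2 := NFA
  (fun x a y => match x, y with
     | inl p, inl q => nfa_step p a q
     | inr p, inr q => nfa_step p a q
     | _, _ => false end)
  (fun x => match x with inl p => @nfa_init N1 p | inr p => @nfa_init N2 p end)
  (fun x => match x with inl p => @nfa_final N1 p | inr p => @nfa_final N2 p end).

Lemma card_accepting_sum N1 N2 w :
  #|accepting (nfa_sum N1 N2) w| = #|accepting N1 w| + #|accepting N2 w|.
Proof.
pose runl := @map_run N1 (nfa_sum N1 N2) inl (size w).+1.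
pose runr := @map_run N2 (nfa_sum N1 N2) inr (size w).+1.
have -> : accepting (nfa_sum N1 N2) w = runl @: accepting N1 w :|: runr @: accepting N2 w.
  apply/setP => f; rewrite in_setU; apply/idP/orP => [f_acc|].
    case f0: (f ord0) => [p|p]; [left|right]; apply/imsetP;
      by apply: accepting_from_image f_acc f0 => // q a [] // q' _; exists q'.
  by case=> /imsetP [g g_acc ->]; rewrite map_run_accepting.
rewrite cardsU !card_imset; try by apply: map_run_inj => x y [].
suff -> : runl @: accepting N1 w :&: runr @: accepting N2 w = set0 by rewrite cards0 subn0.
apply/setP => f; rewrite !inE; apply/negP => /andP [/imsetP [g _ ->] /imsetP [g' _]].
by move/ffunP/(_ ord0); rewrite !ffunE.
Qed.

Lemma nfa_reversible_sum N1 N2 :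
  nfa_reversible N1 -> nfa_reversible N2 -> nfa_reversible (nfa_sum N1 N2).
Proof.
move=> [det1 codet1] [det2 codet2]; split.
  move=> [p|p] [q|q] [q'|q'] a //= s s'.
    by rewrite (det1 _ _ _ _ s s').
  by rewrite (det2 _ _ _ _ s s').
move=> [p|p] [p'|p'] [q|q] a //= s s'.
  by rewrite (codet1 _ _ _ _ s s').
by rewrite (codet2 _ _ _ _ s s').
Qed.

Definition nfa_prod N1 N2 := NFA
  (fun (x : nfa_state N1 * nfa_state N2) a y => nfa_step x.1 a y.1 && nfa_step x.2 a y.2)
  (fun x => nfa_init x.1 && nfa_init x.2) (fun x => nfa_final x.1 && nfa_final x.2).

Lemma card_accepting_prod N1 N2 w :
  #|accepting (nfa_prod N1 N2) w| = #|accepting N1 w| * #|accepting N2 w|.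
Proof.
pose pair_run (g : {ffun 'I_(size w).+1 -> nfa_state N1} * {ffun 'I_(size w).+1 -> nfa_state N2})
  : {ffun 'I_(size w).+1 -> nfa_state (nfa_prod N1 N2)} := [ffun k => (g.1 k, g.2 k)].
have pair_run_inj : injective pair_run.
  move=> [g1 g2] [g1' g2'] /ffunP eq_g; congr pair; apply/ffunP => k;
    by have := eq_g k; rewrite !ffunE => -[].
have pair_run_acc g : (pair_run g \in accepting (nfa_prod N1 N2) w) =
    (g \in setX (accepting N1 w) (accepting N2 w)).
  rewrite !inE /nfa_run !ffunE /=.
  under eq_forallb => k do rewrite !ffunE /=.
  rewrite forall_andb.
  by case: [forall _, _] [forall _, _] (nfa_init _) (nfa_init _) (nfa_final _)
    (nfa_final _) => [] [] [] [] [] [].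
rewrite -cardsX -(card_imset _ pair_run_inj); apply: eq_card => f.
apply/idP/imsetP => [f_acc|[g g_acc ->]]; last by rewrite pair_run_acc.
have f_eq : f = pair_run ([ffun k => (f k).1], [ffun k => (f k).2]).
  by apply/ffunP => k; rewrite !ffunE; case: (f k).
by eexists; last exact: f_eq; rewrite -pair_run_acc -f_eq.
Qed.

Lemma nfa_reversible_prod N1 N2 :
  nfa_reversible N1 -> nfa_reversible N2 -> nfa_reversible (nfa_prod N1 N2).
Proof.
move=> [det1 codet1] [det2 codet2]; split.
  move=> [p1 p2] [q1 q2] [q1' q2'] a /= /andP [s1 s2] /andP [s1' s2'].
  by rewrite (det1 _ _ _ _ s1 s1') (det2 _ _ _ _ s2 s2').
move=> [p1 p2] [p1' p2'] [q1 q2] a /= /andP [s1 s2] /andP [s1' s2'].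
by rewrite (codet1 _ _ _ _ s1 s1') (codet2 _ _ _ _ s2 s2').
Qed.

Lemma rev_odd_const b : rev_nfa_lang odd (fun _ => b).
Proof.
exists (const_nfa b); split; first by split=> [] [] [] [].
by move=> w; rewrite card_accepting_const; case: b.
Qed.

Lemma rev_odd_xor L1 L2 : rev_nfa_lang odd L1 -> rev_nfa_lang odd L2 ->
  rev_nfa_lang odd (fun w => L1 w (+) L2 w).
Proof.
move=> [N1 [rev1 L1E]] [N2 [rev2 L2E]]; exists (nfa_sum N1 N2).
by split=> [|w]; [exact: nfa_reversible_sum | rewrite card_accepting_sum oddD L1E L2E].
Qed.

Lemma rev_odd_and L1 L2 : rev_nfa_lang odd L1 -> rev_nfa_lang odd L2 ->
  rev_nfa_lang odd (fun w => L1 w && L2 w).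
Proof.
move=> [N1 [rev1 L1E]] [N2 [rev2 L2E]]; exists (nfa_prod N1 N2).
by split=> [|w]; [exact: nfa_reversible_prod | rewrite card_accepting_prod oddM L1E L2E].
Qed.

Lemma rev_odd_compl L : rev_nfa_lang odd L -> rev_nfa_lang odd (fun w => ~~ L w).
Proof.
move=> revL; have := rev_odd_xor revL (rev_odd_const true).
by congr rev_nfa_lang; apply: functional_extensionality => w; rewrite addbT.
Qed.

Lemma rev_odd_or L1 L2 : rev_nfa_lang odd L1 -> rev_nfa_lang odd L2 ->
  rev_nfa_lang odd (fun w => L1 w || L2 w).
Proof.
move=> /rev_odd_compl h1 /rev_odd_compl h2.
have := rev_odd_compl (rev_odd_and h1 h2).
by congr rev_nfa_lang; apply: functional_extensionality => w; rewrite -negb_or negbK.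
Qed.

Lemma rev_nfa_lang_odd L : rev_nfa_lang (leq 1) L -> rev_nfa_lang odd L.
Proof.
move=> [N [[detN codetN] LE]].
have -> : L = fun w => \big[orb/false]_(p | @nfa_init N p) odd #|accepting (nfa_at p) w|.
  by apply: functional_extensionality => w; rewrite LE card_accepting_gt0.
apply: language_big_ind => [|L1 L2|p _]; [exact: rev_odd_const|exact: rev_odd_or|].
by exists (nfa_at p).
Qed.

Lemma rev_odd_bool_closure L :
  rev_nfa_lang odd L <-> bool_closure (rev_nfa_lang (leq 1)) L.
Proof.
split=> [[N [[detN codetN] LE]]|].
  have -> : L = fun w => \big[addb/false]_(p | @nfa_init N p) (0 < #|accepting (nfa_at p) w|).
    by apply: functional_extensionality => w; rewrite LE odd_card_accepting.
  apply: language_big_ind => [|L1 L2|p _]; [exact: bc_empty|exact: bool_closure_xor|].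
  by apply: bc_base; exists (nfa_at p).
elim=> {L} [L /rev_nfa_lang_odd //|L _|||L1 L2 _ h1 _ h2|L1 L2 _ h1 _ h2].
- exact: rev_odd_compl.
- exact: rev_odd_const.
- exact: rev_odd_const.
- exact: rev_odd_or.
- exact: rev_odd_and.
Qed.

End NFA.

Section Support.
Variables (S : eqType) (add mul : S -> S -> S) (zero one : S) (Sigma : finType).

Definition support (A : wautomaton S Sigma) : nfa Sigma :=
  NFA (fun p a q => wa_sigma A p a q != zero)
      (fun q => wa_iota A q != zero) (fun q => wa_tau A q != zero).

Definition lift_nfa (c : bool -> S) (N : nfa Sigma) : wautomaton S Sigma :=
  WAut (fun p a q => c (nfa_step p a q))
       (fun q => c (@nfa_init _ N q)) (fun q => c (@nfa_final _ N q)).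

Lemma support_lift c N : (forall b, (c b != zero) = b) -> support (lift_nfa c N) = N.
Proof.
move=> cE; case: N => Q step init final; rewrite /support /=.
congr NFA; do !(apply: functional_extensionality => ?); exact: cE.
Qed.

Lemma RevL_rev_nfa_lang (acc : pred nat) (c : bool -> S) (L : language Sigma) :
  (forall b, (c b != zero) = b) ->
  (forall A w, (behaviour add mul zero one A w != zero) = acc #|accepting (support A) w|) ->
  RevL add mul zero one L <-> rev_nfa_lang acc L.
Proof.
move=> cE behE; split=> [[A [revA LE]]|[N [revN LE]]].
  by exists (support A); split=> // w; rewrite LE behE.
have suppE := support_lift N cE.
exists (lift_nfa c N); split=> [|w]; last by rewrite behE suppE.
by change (nfa_reversible (support (lift_nfa c N))); rewrite suppE.
Qed.

End Support.

Section Semirings.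
Variable Sigma : finType.
Local Open Scope ring_scope.

Lemma F2_neq0 (x : 'F_2) : x != 0 -> x = 1.
Proof. by case: x => -[|[|//]] ? ? //; apply/val_inj. Qed.

Lemma F2_natr_neq0 n : ((n%:R : 'F_2) != 0) = odd n.
Proof. by rewrite Zp_nat -val_eqE /= modn2; case: odd. Qed.

Lemma behaviour_F2 (A : wautomaton 'F_2 Sigma) w :
  behaviour (fun x y => x + y) (fun x y => x * y) 0 1 A w =
  #|accepting (support 0 A) w|%:R.
Proof.
have weightE f : is_run 0 f ->
    run_weight (fun x y => x * y) 1 f = if f \in accepting (support 0 A) w then 1 else 0.
  move=> f_run; rewrite /run_weight inE -[nfa_run _]/(is_run 0 f) f_run /=.
  set prod := (X in _ * X * _); have -> : prod = 1.
    apply: (big_ind (fun x => x = 1)) => // [x y -> ->|k _]; first exact: mulr1.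
    by apply: F2_neq0; move/forallP: f_run.
  rewrite mulr1.
  by case: eqVneq => [->|/F2_neq0 ->]; case: eqVneq => [->|/F2_neq0 ->];
    rewrite ?mulr0 ?mul0r ?mulr1.
rewrite /behaviour (eq_bigr _ weightE) -big_mkcondr /=.
rewrite (eq_bigl (mem (accepting (support 0 A) w))) ?sumr_const // => f.
by rewrite andb_idl // inE => /and3P [].
Qed.

Lemma behaviour_B (A : wautomaton bool Sigma) w :
  behaviour orb andb false true A w = (0 < #|accepting (support false A) w|)%N.
Proof.
have weightE f : is_run false f -> run_weight andb true f = (f \in accepting (support false A) w).
  move=> f_run; rewrite /run_weight inE -[nfa_run _]/(is_run false f) f_run /=.
  set prod := (X in _ && X && _); have -> : prod = true.
    apply: (big_ind (fun x => x = true)) => // [x y -> ->//|k _].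
    by move/forallP: f_run => /(_ k); case: wa_sigma.
  by rewrite andbT; case: wa_iota; case: wa_tau.
rewrite /behaviour (eq_bigr _ weightE) big_orE.
apply/existsP/card_gt0P => [[f /andP [_ f_acc]]|[f f_acc]]; exists f => //.
by rewrite f_acc andbT; move: f_acc; rewrite inE => /and3P [].
Qed.

End Semirings.

Lemma RevL_F2_rev_odd (Sigma : finType) (L : language Sigma) :
  RevL_F2 L <-> rev_nfa_lang odd L.
Proof.
apply: (RevL_rev_nfa_lang (c := fun b : bool => (b%:R : 'F_2)%R)) => [b|A w].
  by rewrite F2_natr_neq0; case: b.
by rewrite behaviour_F2 F2_natr_neq0.
Qed.

Lemma RevL_B_rev_nfa_lang (Sigma : finType) (L : language Sigma) :
  RevL_B L <-> rev_nfa_lang (leq 1) L.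
Proof.
apply: (RevL_rev_nfa_lang (c := id)) => [[]|A w] //.
by rewrite behaviour_B; case: (_ < _)%N.
Qed.

Theorem theorem1 (Sigma : finType) (HSigma : 0 < #|Sigma|) (L : language Sigma) :
  RevL_F2 L <-> bool_closure (@RevL_B Sigma) L.
Proof.
have revB L' := RevL_B_rev_nfa_lang L'.
split=> [/RevL_F2_rev_odd /rev_odd_bool_closure | revL].
  by apply: bool_closure_mono => L' /revB.
apply/RevL_F2_rev_odd/rev_odd_bool_closure.
by apply: bool_closure_mono revL => L' /revB.
Qed.
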